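(* Let $\Gamma\in(0,1]$, $d_0\in(0,1)$, $r=1-\Gamma+\Gamma d_0$, and let $(b(t),d(t))$ be the solution of $\dot b=d$, $\dot d=\frac{\Gamma d}{1-\Gamma b}(1-b-d)-d$ with $b(0)=0$, $d(0)=d_0$, and $a(t)=b(t)+d(t)$. For every $\beta$ with $d_0\le\beta<d_0/r$, $$\inf\{t\ge0:\ a(t)\ge\beta\}=T(\beta,d_0,\Gamma):=\frac1r\ln\!\Big(\frac{1-r}{1-\frac{\beta}{d_0}r}\Big),$$ and $a(T(\beta,d_0,\Gamma))=\beta$. No finite time achieves $a(t)\ge\beta$ if $\beta\ge d_0/r$.
   Context: This o.d.e.\ is the HILT fluid limit for thresholds uniform on $[0,1]$; $a(t)$ is the fraction of destinations at time $t$. *)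

From Stdlib Require Export Reals.
Open Scope R_scope.

Definition is_inf (E : R -> Prop) (m : R) : Prop :=
  (forall x, E x -> m <= x) /\
  (forall m', (forall x, E x -> m' <= x) -> m' <= m).

Definition rr (d0 G : R) : R := 1 - G + G * d0.

Definition Tbeta (beta d0 G : R) : R :=
  / rr d0 G * ln ((1 - rr d0 G) / (1 - beta / d0 * rr d0 G)).

Definition is_solution (G d0 : R) (b d : R -> R) : Prop :=
  b 0 = 0 /\ d 0 = d0 /\
  (forall t, 0 <= t -> 1 - G * b t <> 0) /\
  (forall t, 0 <= t -> derivable_pt_lim b t (d t)) /\
  (forall t, 0 <= t ->
     derivable_pt_lim d t (G * d t / (1 - G * b t) * (1 - b t - d t) - d t)).

From Stdlib Require Import Reals Lra.
Open Scope R_scope.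

(* Along a solution the quantity (1 - b - d) / (1 - G b) is a
   first integral; its value 1 - d0 at time 0 yields the linear relation
   d = d0 - r b with r = 1 - G + G d0.  Hence b solves the linear equation
   b' = d0 - r b, so b(t) = (d0/r)(1 - e^{-rt}) and
       a(t) = b(t) + d(t) = d0/r - (1 - r)(d0/r) e^{-rt}.
   Since 0 < r < 1 this explicit profile is strictly increasing and stays
   strictly below its limit d0/r; solving profile(T) = beta gives exactly
   T = Tbeta beta d0 G, and the first hitting time of a level by a strictly
   increasing function is the time at which it attains that level. *)

Lemma const_on_nonneg (f : R -> R) :
  (forall t, 0 <= t -> derivable_pt_lim f t 0) ->
  forall t, 0 <= t -> f t = f 0.
Proof.
  intros Hf t Ht.
  destruct (Req_dec t 0) as [-> | Hn]; [reflexivity |].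
  destruct (MVT_cor2 f (fun _ => 0) 0 t) as [c [Hc _]]; [lra | | lra].
  intros c Hc. apply Hf; lra.
Qed.

(* First integral of the system: (1 - b - d)/(1 - G b) is conserved, which
   forces the linear relation d = d0 - r b between the two components. *)
Lemma solution_linear_relation (G d0 : R) (b d : R -> R) :
  is_solution G d0 b d -> forall t, 0 <= t -> d t = d0 - rr d0 G * b t.
Proof.
  intros [hb0 [hd0 [hnz [hb hd]]]].
  set (w := ((fct_cte 1 - (b + d)) / (fct_cte 1 - mult_real_fct G b))%F).
  assert (Hw : forall t, 0 <= t -> derivable_pt_lim w t 0).
  { intros t Ht. pose proof (hnz t Ht) as Hn.
    replace 0 with
      (((0 - (d t + (G * d t / (1 - G * b t) * (1 - b t - d t) - d t))) *
          (fct_cte 1 - mult_real_fct G b)%F t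
        - (0 - G * d t) * (fct_cte 1 - (b + d))%F t)
       / ((fct_cte 1 - mult_real_fct G b)%F t)²)
      by (unfold fct_cte, minus_fct, plus_fct, mult_real_fct, Rsqr;
          field; exact Hn).
    apply derivable_pt_lim_div.
    - apply derivable_pt_lim_minus; [apply derivable_pt_lim_const |].
      apply derivable_pt_lim_plus; auto.
    - apply derivable_pt_lim_minus; [apply derivable_pt_lim_const |].
      apply derivable_pt_lim_scal; auto.
    - exact Hn. }
  intros t Ht.
  pose proof (const_on_nonneg w Hw t Ht) as Hconst.
  unfold w, div_fct, fct_cte, minus_fct, plus_fct, mult_real_fct in Hconst.
  rewrite hb0, hd0, Rmult_0_r, Rminus_0_r, Rdiv_1_r in Hconst.
  assert (Hcleared : 1 - (b t + d t) = (1 - (0 + d0)) * (1 - G * b t)).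
  { rewrite <- Hconst. field. exact (hnz t Ht). }
  unfold rr. lra.
Qed.

Lemma linear_ode_solution (r c : R) (f : R -> R) :
  r <> 0 ->
  (forall t, 0 <= t -> derivable_pt_lim f t (c - r * f t)) ->
  forall t, 0 <= t -> f t = c / r + (f 0 - c / r) * exp (- (r * t)).
Proof.
  intros Hr Hf.
  set (v := fun x => (f x - c / r) * exp (r * x)).
  assert (Hv : forall t, 0 <= t -> derivable_pt_lim v t 0).
  { intros t Ht.
    replace 0 with ((c - r * f t - 0) * exp (r * t)
                    + (f t - c / r) * (exp (r * t) * (r * 1)))
      by (field; exact Hr).
    apply (derivable_pt_lim_mult (fun x => f x - c / r) (fun x => exp (r * x))).
    - apply (derivable_pt_lim_minus f (fct_cte (c / r))); auto.
      apply derivable_pt_lim_const.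
    - apply (derivable_pt_lim_comp (mult_real_fct r id) exp).
      + apply derivable_pt_lim_scal, derivable_pt_lim_id.
      + apply derivable_pt_lim_exp. }
  intros t Ht.
  pose proof (const_on_nonneg v Hv t Ht) as Hconst. unfold v in Hconst.
  rewrite Rmult_0_r, exp_0, Rmult_1_r in Hconst.
  rewrite exp_Ropp, <- Hconst.
  pose proof (exp_pos (r * t)).
  field. split; [lra | exact Hr].
Qed.

Definition profile (d0 r t : R) : R :=
  d0 / r - (1 - r) * d0 / r * exp (- (r * t)).

Lemma solution_closed_form (G d0 : R) (b d : R -> R) :
  rr d0 G <> 0 -> is_solution G d0 b d ->
  forall t, 0 <= t -> b t + d t = profile d0 (rr d0 G) t.
Proof.
  intros Hr hsol.
  pose proof (solution_linear_relation G d0 b d hsol) as Hlin.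
  destruct hsol as [hb0 [_ [_ [hb _]]]].
  assert (Hb : forall t, 0 <= t ->
            b t = d0 / rr d0 G + (b 0 - d0 / rr d0 G) * exp (- (rr d0 G * t))).
  { apply linear_ode_solution; [exact Hr |].
    intros t Ht. rewrite <- Hlin by exact Ht. auto. }
  intros t Ht.
  rewrite (Hlin t Ht), (Hb t Ht), hb0. unfold profile. field. exact Hr.
Qed.

Section Profile.
Variables d0 r : R.
Hypothesis hd0 : 0 < d0.
Hypothesis hr : 0 < r < 1.

Lemma profile_coef_pos : 0 < (1 - r) * d0 / r.
Proof.
  apply Rdiv_lt_0_compat; [apply Rmult_lt_0_compat |]; lra.
Qed.

Lemma profile_lt_limit (t : R) : profile d0 r t < d0 / r.
Proof.
  unfold profile.
  pose proof (Rmult_lt_0_compat _ _ profile_coef_pos (exp_pos (- (r * t)))).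
  lra.
Qed.

Lemma profile_increasing (s t : R) : s < t -> profile d0 r s < profile d0 r t.
Proof.
  intros Hst. unfold profile.
  assert (Hexp : exp (- (r * t)) < exp (- (r * s))) by (apply exp_increasing; nra).
  pose proof (Rmult_lt_compat_l _ _ _ profile_coef_pos Hexp).
  lra.
Qed.

Lemma profile_hits (beta : R) :
  d0 <= beta < d0 / r ->
  0 <= / r * ln ((1 - r) / (1 - beta / d0 * r)) /\
  profile d0 r (/ r * ln ((1 - r) / (1 - beta / d0 * r))) = beta.
Proof.
  intros [Hlo Hhi].
  assert (Hbr : beta * r < d0).
  { apply (Rmult_lt_compat_r r) in Hhi; [| lra].
    replace (d0 / r * r) with d0 in Hhi by (field; lra). exact Hhi. }
  set (D := 1 - beta / d0 * r).
  assert (HD : 0 < D <= 1 - r).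
  { assert (beta / d0 * r < 1)
      by (apply (Rmult_lt_reg_r d0); [lra |]; field_simplify; lra).
    assert (1 <= beta / d0)
      by (apply (Rmult_le_reg_r d0); [lra |]; field_simplify; lra).
    unfold D. split; nra. }
  set (X := (1 - r) / D).
  assert (HX : 1 <= X)
    by (apply (Rmult_le_reg_r D); [lra |]; unfold X; field_simplify; lra).
  assert (HlnX : 0 <= ln X).
  { rewrite <- ln_1. destruct HX as [HX | <-]; [| lra].
    left. apply ln_increasing; lra. }
  split.
  - apply Rmult_le_pos; [left; apply Rinv_0_lt_compat |]; lra.
  - unfold profile.
    replace (r * (/ r * ln X)) with (ln X) by (field; lra).
    rewrite exp_Ropp, exp_ln by lra.
    unfold X, D. field. repeat split; lra.
Qed.

End Profile.

Lemma hitting_time_is_inf (f : R -> R) (beta T : R) :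
  (forall s t, 0 <= s -> s < t -> f s < f t) ->
  0 <= T -> f T = beta ->
  is_inf (fun t => 0 <= t /\ f t >= beta) T.
Proof.
  intros Hinc HT HfT. split.
  - intros t [Ht Hft].
    destruct (Rle_or_lt T t) as [| Hlt]; [assumption |].
    pose proof (Hinc t T Ht Hlt). lra.
  - intros m Hm. apply Hm. split; [exact HT | lra].
Qed.

Theorem theorem6 (G d0 : R) (b d : R -> R)
  (hG : 0 < G <= 1) (hd0 : 0 < d0 < 1)
  (hsol : is_solution G d0 b d) :
  (forall beta, d0 <= beta < d0 / rr d0 G ->
     is_inf (fun t => 0 <= t /\ b t + d t >= beta) (Tbeta beta d0 G) /\
     b (Tbeta beta d0 G) + d (Tbeta beta d0 G) = beta) /\
  (forall beta, beta >= d0 / rr d0 G ->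
     forall t, 0 <= t -> b t + d t < beta).
Proof.
  assert (hr : 0 < rr d0 G < 1) by (unfold rr; nra).
  pose proof (solution_closed_form G d0 b d ltac:(lra) hsol) as Ha.
  split.
  - intros beta Hbeta.
    destruct (profile_hits d0 (rr d0 G) ltac:(lra) hr beta Hbeta) as [HT HaT].
    fold (Tbeta beta d0 G) in HT, HaT.
    assert (HbT : b (Tbeta beta d0 G) + d (Tbeta beta d0 G) = beta)
      by (rewrite Ha; assumption).
    split; [| exact HbT].
    apply hitting_time_is_inf; [| exact HT | exact HbT].
    intros s t Hs Hst. rewrite !Ha by lra.
    apply profile_increasing; lra.
  - intros beta Hbeta t Ht. rewrite Ha by exact Ht.
    pose proof (profile_lt_limit d0 (rr d0 G) ltac:(lra) hr t). lra.
Qed.
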